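(* Let $(\frac pq,\frac rs)$ be a Farey pair of order $n$ with $2\le q<s$. Put $d=\lfloor n/q\rfloor$, $\delta=\gcd(d,s)$, and define $s_1,d_1,r_1$ and $j_0\in\{0,\dots,\delta-1\}$ by $s=s_1\delta$, $d=d_1\delta$, $r=r_1\delta+j_0$; let $\hat r\in\{0,\dots,s_1-1\}$ and $l_0\in\{0,\dots,d_1-1\}$ be the nonnegative integers with $r_1=d_1\hat r-l_0s_1$. For $j\in\{0,\dots,\delta-1\}$ let $g_{1,j}(t)=t^{qd_1}-t^{qd_1-s_1}e^{2\pi ij/\delta}$ and $\hat g_{1,j}(t)=t^{qd_1}-t^{qd_1-s_1}e^{2\pi ij/(\delta d_1)}$. Then $e^{2\pi i r/s}$ is a root of $g_{1,j}$ if and only if $j=j_0$, and the root $\lambda$ of $\hat g_{1,j_0}$ satisfying $\lambda^{d_1}=e^{2\pi ir/s}$ is $\lambda=e^{\frac{2\pi i}{d_1}(\frac rs+l_0)}$.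
   Context: $\mathcal{F}_n=\{p/q:0\le p<q\le n,\ \gcd(p,q)=1\}$; a Farey pair of order $n$ is a pair $(\frac pq,\frac rs)$ of elements of $\mathcal F_n$ with $\frac pq<\frac rs$ and no element of $\mathcal F_n$ strictly between them. $g_{1,j},\hat g_{1,j}$ are the functions $g_{\alpha,j}(t)=(t^q-\beta)^{d_1}-\alpha^{d_1}t^{qd_1-s_1}e^{2\pi ij/\delta}$ and $\hat g_{\alpha,j}(t)=t^{qd_1}-\beta-\alpha t^{qd_1-s_1}e^{2\pi ij/(\delta d_1)}$ at $\alpha=1$, $\beta=0$, regarded as rational functions of $t$. *)

From HB Require Import structures.
From mathcomp Require Import all_boot all_order all_algebra.
From mathcomp Require Import reals trigo.
From mathcomp Require Import complex.
Set Implicit Arguments. Unset Strict Implicit. Unset Printing Implicit Defensive.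
Import Order.TTheory GRing.Theory Num.Theory.
Local Open Scope ring_scope.

Definition farey_elem (n p q : nat) : bool := [&& (p < q)%N, (q <= n)%N & coprime p q].

Definition farey_pair (n p q r s : nat) : Prop :=
  [/\ farey_elem n p q, farey_elem n r s, (p * s < r * q)%N &
      forall a b : nat, farey_elem n a b -> ~ ((p * b < a * q)%N /\ (a * s < r * b)%N)].

Definition e2pi {R : realType} (x : R) : R[i] :=
  Complex (cos (2 * pi * x)) (sin (2 * pi * x)).

(** g_{1,j}(t) = t^{q d1} - t^{q d1 - s1} e^{2 pi i j / delta}  (integer exponents:
    regarded as a rational function of t). *)
Definition g1 {R : realType} (q d1 s1 delta j : nat) (t : R[i]) : R[i] :=
  t ^ ((q * d1)%N : int) - t ^ ((q * d1)%N%:Z - s1%:Z) * e2pi ((j%:R : R) / delta%:R).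

Definition g1hat {R : realType} (q d1 s1 delta j : nat) (t : R[i]) : R[i] :=
  t ^ ((q * d1)%N : int) - t ^ ((q * d1)%N%:Z - s1%:Z)
     * e2pi ((j%:R : R) / (delta * d1)%N%:R).

(* Write e(x) = exp(2 pi i x).  Since s = s1 delta and r = r1 delta + j0, we have
   e(r/s)^s1 = e(j0/delta), and g_{1,j}(t) = t^(q d1 - s1) (t^s1 - e(j/delta))
   vanishes at t <> 0 iff t^s1 = e(j/delta); the values e(j/delta), j < delta,
   are pairwise distinct.  For the second part, lambda0 = e((r/s + l0)/d1)
   satisfies lambda0^d1 = e(r/s) and, because d1 divides r1 + l0 s1 = d1 rhat,
   lambda0^s1 = e(j0/(delta d1)).  As s1 and d1 are coprime, a nonzero lambda
   is determined by lambda^s1 and lambda^d1 (Bezout). *)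
From HB Require Import structures.
From mathcomp Require Import all_boot all_order all_algebra.
From mathcomp Require Import reals trigo.
From mathcomp Require Import complex.
From mathcomp Require Import ring lra zify.
Import Order.TTheory GRing.Theory Num.Theory.
Local Open Scope ring_scope.

Lemma coprime_divn_gcd (m n : nat) :
  (0 < gcdn m n)%N -> coprime (m %/ gcdn m n) (n %/ gcdn m n).
Proof.
move=> g_gt0; rewrite /coprime -(eqn_pmul2r g_gt0) mul1n muln_gcdl.
by rewrite !divnK ?dvdn_gcdl ?dvdn_gcdr.
Qed.

Lemma exprz_sub_mul_eq0 (F : fieldType) (t c : F) (a b : nat) : t != 0 ->
  t ^ (a : int) - t ^ (a%:Z - b%:Z) * c = 0 <-> t ^+ b = c.
Proof.
move=> t_neq0.
have -> : t ^ (a : int) = t ^ (a%:Z - b%:Z) * t ^+ b.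
  by rewrite -[t ^+ b]/(t ^ (b : int)) -exprzDr ?unitfE // subrK.
rewrite -mulrBr; split => [/eqP | -> ]; last by rewrite subrr mulr0.
by rewrite mulf_eq0 expfz_eq0 (negbTE t_neq0) andbF subr_eq0 => /eqP.
Qed.

Lemma expr_coprime_inj {D : idomainType} {x y : D} {a b : nat} :
  (0 < a)%N -> coprime a b -> y != 0 ->
  x ^+ a = y ^+ a -> x ^+ b = y ^+ b -> x = y.
Proof.
move=> a_gt0 co_ab y_neq0 xya xyb.
case: (egcdnP b a_gt0) => u v bezout _; move/eqP: co_ab bezout => -> bezout.
have : x ^+ (u * a) = y ^+ (u * a) by rewrite mulnC !exprM xya.
rewrite bezout !exprD !expr1 mulnC !exprM xyb => /mulfI; apply.
by rewrite !expf_neq0.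
Qed.

Section Exp2PiI.
Context {R : realType}.
Implicit Types x y : R.

Lemma e2piD x y : e2pi (x + y) = e2pi x * e2pi y.
Proof. by rewrite /e2pi mulrDr cosD sinD /=; congr Complex; ring. Qed.

Lemma e2pi0 : e2pi (0 : R) = 1.
Proof. by rewrite /e2pi mulr0 cos0 sin0. Qed.

Lemma e2pi1 : e2pi (1 : R) = 1.
Proof. by rewrite /e2pi mulr1 mulr_natl cos2pi sin2pi. Qed.

Lemma e2piX x (n : nat) : e2pi x ^+ n = e2pi (n%:R * x).
Proof.
elim: n => [|n IH]; first by rewrite mul0r e2pi0.
by rewrite exprSr IH -e2piD -natr1 mulrDl mul1r.
Qed.

Lemma e2pi_nat (k : nat) : e2pi (k%:R : R) = 1.
Proof. by rewrite -[k%:R]mulr1 -e2piX e2pi1 expr1n. Qed.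

Lemma e2piDn x (k : nat) : e2pi (x + k%:R) = e2pi x.
Proof. by rewrite e2piD e2pi_nat mulr1. Qed.

Lemma e2pi_neq0 x : e2pi x != 0.
Proof.
apply/eqP; rewrite /e2pi => -[cos0 sin0].
have := cos2Dsin2 (2 * pi * x).
by rewrite cos0 sin0 expr0n addr0 => /eqP; rewrite eq_sym oner_eq0.
Qed.

Lemma e2pi_eq1 x : `|x| < 1 -> e2pi x = 1 -> x = 0.
Proof.
move=> x_lt1 [cos1 _]; apply/eqP; rewrite -normr_eq0.
have pi_gt0 : (0 : R) < pi := pi_gt0 R.
set y := pi * `|x|.
have : cos (y *+ 2) = 1.
  by rewrite -cos1 -[RHS]cos_norm normrM [`|2 * pi|]gtr0_norm ?mulr_gt0 // /y -mulr_natl mulrA.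
rewrite cos_mulr2n cos2sin2 => cos2y.
have /eqP : sin y ^+ 2 = 0 by lra.
rewrite sqrf_eq0; apply: contraLR; rewrite -normr_gt0 normr_id => x_gt0.
rewrite gt_eqF // sin_gt0_pi // /y pmulr_rgt0 // x_gt0 /=.
by rewrite -[X in _ < X]mulr1 ltr_pM2l.
Qed.

Lemma e2pi_frac_inj (m j k : nat) : (j < m)%N -> (k < m)%N ->
  e2pi (j%:R / m%:R : R) = e2pi (k%:R / m%:R) -> j = k.
Proof.
move=> j_lt k_lt.
have m_gt0 : (0 : R) < m%:R by rewrite ltr0n (leq_ltn_trans _ j_lt).
rewrite -[j%:R / _](subrK (k%:R / m%:R)) e2piD -[RHS]mul1r.
move=> /(mulIf (e2pi_neq0 _)) /e2pi_eq1.
rewrite -mulrBl normrM [`|_^-1|]gtr0_norm ?invr_gt0 // ltr_pdivrMr // mul1r.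
have jR : (j%:R : R) < m%:R by rewrite ltr_nat.
have kR : (k%:R : R) < m%:R by rewrite ltr_nat.
have j_ge0 : (0 : R) <= j%:R := ler0n _ _.
have k_ge0 : (0 : R) <= k%:R := ler0n _ _.
have /[swap]/[apply] : `|j%:R - k%:R| < (m%:R : R).
  by rewrite ltr_norml; apply/andP; split; lra.
move/eqP; rewrite mulf_eq0 invr_eq0 (gt_eqF m_gt0) orbF subr_eq0 eqr_nat.
exact/eqP.
Qed.

End Exp2PiI.

Section FareyRoots.
Variables (R : realType) (q delta s1 d1 r1 j0 l0 : nat).
Hypotheses (delta_gt0 : (0 < delta)%N) (s1_gt0 : (0 < s1)%N) (d1_gt0 : (0 < d1)%N).

Local Notation r := (r1 * delta + j0)%N.
Local Notation s := (s1 * delta)%N.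
Local Notation zeta := (e2pi ((r%:R : R) / s%:R)).
Local Notation lambda0 := (e2pi (((r%:R : R) / s%:R + l0%:R) / d1%:R)).

Let deltaR_neq0 : (delta%:R : R) != 0. Proof. by rewrite pnatr_eq0 -lt0n. Qed.
Let s1R_neq0 : (s1%:R : R) != 0. Proof. by rewrite pnatr_eq0 -lt0n. Qed.
Let d1R_neq0 : (d1%:R : R) != 0. Proof. by rewrite pnatr_eq0 -lt0n. Qed.

Lemma zeta_exprs1 : zeta ^+ s1 = e2pi (j0%:R / delta%:R).
Proof.
rewrite e2piX natrD !natrM.
have -> : (s1%:R : R) * ((r1%:R * delta%:R + j0%:R) / (s1%:R * delta%:R))
          = j0%:R / delta%:R + r1%:R.
  by field; rewrite s1R_neq0 deltaR_neq0.
by rewrite e2piDn.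
Qed.

Lemma g1_root_iff j : (j < delta)%N -> (j0 < delta)%N ->
  g1 q d1 s1 delta j zeta = 0 <-> j = j0.
Proof.
move=> j_lt j0_lt; rewrite /g1 exprz_sub_mul_eq0 ?e2pi_neq0 // zeta_exprs1.
by split=> [/esym/e2pi_frac_inj|->]; first exact.
Qed.

Lemma lambda0_exprd1 : lambda0 ^+ d1 = zeta.
Proof. by rewrite e2piX mulrC divfK // e2piDn. Qed.

Lemma lambda0_exprs1 : (d1 %| r1 + l0 * s1)%N ->
  lambda0 ^+ s1 = e2pi (j0%:R / (delta * d1)%N%:R).
Proof.
move=> /dvdnP[k r1E]; rewrite e2piX.
have r1R : (r1%:R : R) = k%:R * d1%:R - l0%:R * s1%:R.
  by rewrite -!natrM -r1E natrD addrK.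
have -> : (s1%:R : R) * ((r%:R / s%:R + l0%:R) / d1%:R)
          = j0%:R / (delta * d1)%N%:R + k%:R.
  by rewrite !natrD !natrM r1R; field; rewrite s1R_neq0 deltaR_neq0 d1R_neq0.
by rewrite e2piDn.
Qed.

Lemma g1hat_root_iff (lambda : R[i]) : coprime s1 d1 ->
  (d1 %| r1 + l0 * s1)%N ->
  (g1hat q d1 s1 delta j0 lambda = 0 /\ lambda ^+ d1 = zeta) <-> lambda = lambda0.
Proof.
move=> co_s1d1 d1_dvd; rewrite /g1hat -lambda0_exprs1 //.
split=> [[g_eq0 pow_d1] | ->]; last first.
  by rewrite exprz_sub_mul_eq0 ?e2pi_neq0 ?lambda0_exprd1.
have lambda_neq0 : lambda != 0.
  apply/eqP => lambda_eq0; move: (e2pi_neq0 ((r%:R : R) / s%:R)).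
  by rewrite -pow_d1 lambda_eq0 expr0n gtn_eqF ?eqxx.
move: g_eq0; rewrite exprz_sub_mul_eq0 // => pow_s1.
apply: (expr_coprime_inj s1_gt0 co_s1d1 (e2pi_neq0 _) pow_s1).
by rewrite pow_d1 lambda0_exprd1.
Qed.

End FareyRoots.

Theorem lemma4p5 (R : realType) (n p q r s : nat) (rhat l0 : nat) :
  farey_pair n p q r s -> (2 <= q)%N -> (q < s)%N ->
  let d := (n %/ q)%N in
  let delta := gcdn d s in
  let s1 := (s %/ delta)%N in
  let d1 := (d %/ delta)%N in
  let r1 := (r %/ delta)%N in
  let j0 := (r %% delta)%N in
  (rhat < s1)%N -> (l0 < d1)%N ->
  (r1%:Z = (d1 * rhat)%N%:Z - (l0 * s1)%N%:Z) ->
  (forall j : nat, (j < delta)%N ->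
     (g1 q d1 s1 delta j (e2pi ((r%:R : R) / s%:R)) = 0 <-> j = j0)) /\
  (forall lambda : R[i],
     (g1hat q d1 s1 delta j0 lambda = 0 /\ lambda ^+ d1 = e2pi ((r%:R : R) / s%:R))
     <-> lambda = e2pi (((r%:R : R) / s%:R + l0%:R) / d1%:R)).
Proof.
move=> _ _ q_lt_s d delta s1 d1 r1 j0 rhat_lt_s1 l0_lt_d1 r1E.
have s_gt0 : (0 < s)%N := leq_ltn_trans (leq0n q) q_lt_s.
have delta_gt0 : (0 < delta)%N by rewrite gcdn_gt0 s_gt0 orbT.
have s1_gt0 : (0 < s1)%N := leq_ltn_trans (leq0n rhat) rhat_lt_s1.
have d1_gt0 : (0 < d1)%N := leq_ltn_trans (leq0n l0) l0_lt_d1.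
have sE : s = (s1 * delta)%N by rewrite divnK ?dvdn_gcdr.
have rE : r = (r1 * delta + j0)%N := divn_eq r delta.
have j0_lt_delta : (j0 < delta)%N := ltn_pmod r delta_gt0.
have co_s1d1 : coprime s1 d1 by rewrite coprime_sym coprime_divn_gcd.
have d1_dvd : (d1 %| r1 + l0 * s1)%N by apply/dvdnP; exists rhat; lia.
clearbody d delta s1 d1 r1 j0; subst r s; split=> [j j_lt | lambda].
  exact: g1_root_iff.
exact: g1hat_root_iff.
Qed.
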